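(* Let $q,m,k,s_1,\ldots,s_u$ be positive integers such that $q$ is a prime power and $m\leq q$. Assume that there exist a weighing matrix of order $m$ and weight $k$ and an orthogonal design of order $m$ and type $(s_1,\ldots,s_u)$. Then: (1) there exist $m$ mutually unbiased unit orthogonal designs of order $mq$ and type $(ks_1,\ldots,ks_u)$ with parameter $\alpha=k^2$; (2) for every nonempty subset $S\subseteq\{1,\ldots,u\}$ there exist $m$ mutually quasi-unbiased unit weighing matrices for the parameters $\left(mq,\;k\sum_{i\in S}s_i,\;k^2,\;(\sum_{i\in S}s_i)^2\right)$.
   Context: Let $\mathbb{T}=\{c\in\mathbb{C}:|c|=1\}$ and let $W^*$ denote the conjugate transpose. A weighing matrix of order $n$ and weight $k$ is an $n\times n$ $(0,1,-1)$-matrix $W$ with $WW^\top=kI_n$; an orthogonal design of order $n$ and type $(s_1,\ldots,s_u)$ in distinct commuting real indeterminates $x_1,\ldots,x_u$ is an $n\times n$ matrix $D$ with entries in $\{0,\pm x_1,\ldots,\pm x_u\}$ with $DD^\top=(s_1x_1^2+\cdots+s_ux_u^2)I_n$. A unit weighing matrix of order $n$ and weight $k$ is an $n\times n$ matrix $W$ with entries in $\{0\}\cup\mathbb{T}$ such that $WW^*=kI_n$. Two unit weighing matrices $W_1,W_2$ of order $n$ and weight $k$ are quasi-unbiased for parameters $(n,k,l,a)$ if $\frac1{\sqrt a}W_1W_2^*$ is a unit weighing matrix of order $n$ and weight $l$; a family is mutually quasi-unbiased if any two distinct members are. A unit orthogonal design of order $n$ and type $(s_1,\ldots,s_u)$ in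 variables $x_1,\ldots,x_u$ (distinct commuting real indeterminates) is an $n\times n$ matrix with entries in $\{0\}\cup\{\epsilon x_i: 1\le i\le u,\ \epsilon\in\mathbb{T}\}$ with $DD^*=(s_1x_1^2+\cdots+s_ux_u^2)I_n$. Two such designs $D_1,D_2$ (same order, type and variables) are unbiased with parameter $\alpha>0$ if there is an $n\times n$ matrix $W$ with entries in $\{0\}\cup\mathbb{T}$ such that $D_1D_2^*=\frac{s_1x_1^2+\cdots+s_ux_u^2}{\sqrt\alpha}W$; a family is mutually unbiased if any two distinct members are. *)

From mathcomp Require Import all_boot all_order all_algebra.
From mathcomp Require Import reals complex.
Set Implicit Arguments.
Unset Strict Implicit.
Unset Printing Implicit Defensive.
Import Order.TTheory GRing.Theory Num.Theory.
Local Open Scope ring_scope.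
Local Open Scope complex_scope.

Definition prime_power (q : nat) : Prop :=
  exists p e : nat, [/\ prime p, (0 < e)%N & q = (p ^ e)%N].

Definition weighing_matrix (n k : nat) (W : 'M[int]_n) : Prop :=
  (forall i j, W i j \in [:: 0; 1; -1]) /\ W *m W^T = (k%:Z)%:M.

(* A formal design in u indeterminates x_0..x_{u-1}: each entry is either 0
   (None) or (-1)^b x_l (Some (b, l)). *)
Definition rdesign (n u : nat) := 'M[option (bool * 'I_u)]_n.

Definition rdesign_eval (R : realType) n u (D : rdesign n u) (x : 'I_u -> R)
  : 'M[R]_n :=
  \matrix_(i, j) match D i j with
                 | None => 0
                 | Some (b, l) => (-1) ^+ b * x l
                 end.

(* orthogonal design of order n and type (s_0,...,s_{u-1}):
   D D^T = (sum_l s_l x_l^2) I, as an identity in the (real, commuting)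
   indeterminates; equivalently, for every real substitution. *)
Definition orthogonal_design (R : realType) n u (s : 'I_u -> nat)
  (D : rdesign n u) : Prop :=
  forall x : 'I_u -> R,
    rdesign_eval D x *m (rdesign_eval D x)^T
    = (\sum_(l < u) (s l)%:R * x l ^+ 2)%:M.

Definition ctrmx (R : realType) m n (A : 'M[R[i]]_(m, n)) : 'M[R[i]]_(n, m) :=
  (map_mx Num.conj A)^T.

Definition zero_or_unit (R : realType) (z : R[i]) : bool :=
  (z == 0) || (`|z| == 1).

Definition unit_weighing_matrix (R : realType) n (k : nat) (W : 'M[R[i]]_n)
  : Prop :=
  (forall i j, zero_or_unit (W i j)) /\ W *m ctrmx W = (k%:R)%:M.

Definition quasi_unbiased (R : realType) n (k l : nat) (a : R)
  (W1 W2 : 'M[R[i]]_n) : Prop :=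
  [/\ unit_weighing_matrix k W1, unit_weighing_matrix k W2 &
      unit_weighing_matrix l (((Num.sqrt a)^-1)%:C *: (W1 *m ctrmx W2))].

Definition mutually_quasi_unbiased (R : realType) n (k l : nat) (a : R)
  (I : finType) (W : I -> 'M[R[i]]_n) : Prop :=
  forall i j, i != j -> quasi_unbiased k l a (W i) (W j).

(* A formal unit design in u indeterminates: each entry is either 0 (None)
   or eps * x_l (Some (eps, l)) with eps in T. *)
Definition udesign (R : realType) (n u : nat) := 'M[option (R[i] * 'I_u)]_n.

Definition udesign_eval (R : realType) n u (D : udesign R n u)
  (x : 'I_u -> R) : 'M[R[i]]_n :=
  \matrix_(i, j) match D i j with
                 | None => 0
                 | Some (e, l) => e * (x l)%:C
                 end.

Definition udesign_coeffs_unit (R : realType) n u (D : udesign R n u) : Prop :=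
  forall i j e l, D i j = Some (e, l) -> `|e| = 1.

Definition unit_orthogonal_design (R : realType) n u (s : 'I_u -> nat)
  (D : udesign R n u) : Prop :=
  udesign_coeffs_unit D /\
  forall x : 'I_u -> R,
    udesign_eval D x *m ctrmx (udesign_eval D x)
    = ((\sum_(l < u) (s l)%:R * x l ^+ 2)%:C)%:M.

Definition unbiased_designs (R : realType) n u (s : 'I_u -> nat) (alpha : R)
  (D1 D2 : udesign R n u) : Prop :=
  [/\ unit_orthogonal_design s D1, unit_orthogonal_design s D2, 0 < alpha &
      exists W : 'M[R[i]]_n,
        (forall i j, zero_or_unit (W i j)) /\
        forall x : 'I_u -> R,
          udesign_eval D1 x *m ctrmx (udesign_eval D2 x)
          = ((\sum_(l < u) (s l)%:R * x l ^+ 2) / Num.sqrt alpha)%:C *: W].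

Definition mutually_unbiased_designs (R : realType) n u (s : 'I_u -> nat)
  (alpha : R) (I : finType) (D : I -> udesign R n u) : Prop :=
  forall i j, i != j -> unbiased_designs s alpha (D i) (D j).

From mathcomp Require Import all_boot all_order all_algebra.
From mathcomp Require Import finfield.
From mathcomp Require Import reals complex ring.
Set Implicit Arguments.
Unset Strict Implicit.
Unset Printing Implicit Defensive.
Import Order.TTheory GRing.Theory Num.Theory.
Local Open Scope ring_scope.
Local Open Scope complex_scope.

(* Index rows and columns of order-mq matrices by 'I_m * F, F = GF(q), and fix
   an injection e : 'I_m -> F.  For a slope l the matrix
   G_l((a,r),(c,t)) = W(a,c) [t = r + l e_c] satisfies G_l G_l^* = k I, and
   for l <> l' every entry of G_l G_l'^* is 0 or +-1, because
   r + l e_c = r' + l' e_c determines c.  For l <> 0 a row of G_l has at most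
   one nonzero entry among the columns (c, t) with t fixed, so with A the
   orthogonal design, G_l (A (x) I_q) is again a unit orthogonal design, and
   the product of two of them is (sum_l s_l x_l^2) G_l G_l'^*.  The slope 0
   lacks this property; it is needed only when m = q, and then I_m (x) W, with
   F indexed through e^-1, takes its place.  Evaluating at the indicator of S
   gives the quasi-unbiased weighing matrices. *)

Lemma sum_delta (K : pzSemiRingType) (I : finType) (g : I -> K) v :
  \sum_i (i == v)%:R * g i = g v.
Proof.
rewrite (bigD1 v) //= eqxx mul1r big1 ?addr0 // => i /negbTE->.
by rewrite mul0r.
Qed.

Lemma sum_pair (V : nmodType) (I J : finType) (f : I * J -> V) :
  \sum_y f y = \sum_i \sum_j f (i, j).
Proof. by rewrite pair_big; apply: eq_bigr => -[]. Qed.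

Lemma natr_eq_pair (K : pzSemiRingType) (I J : eqType) (z w : I * J) :
  ((z == w)%:R : K) = (z.1 == w.1)%:R * (z.2 == w.2)%:R.
Proof.
by case: z w => a r [b t]; rewrite xpair_eqE; case: (a == b); case: (r == t);
  rewrite ?mulr1 ?mulr0.
Qed.

Lemma sum_nat_gt0_set (I : finType) (S : {set I}) (f : I -> nat) :
  (forall i, 0 < f i)%N -> S != set0 -> (0 < \sum_(i in S) f i)%N.
Proof.
move=> f_gt0 /set0Pn[i iS]; rewrite (bigD1 i) //=.
exact: leq_trans (f_gt0 i) (leq_addr _ _).
Qed.

Lemma mulmx_scalarC (K : fieldType) n (A B : 'M[K]_n) (c : K) :
  c != 0 -> A *m B = c%:M -> B *m A = c%:M.
Proof.
move=> c0 AB; have: (c^-1 *: A) *m B = 1%:M.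
  by rewrite -scalemxAl AB scale_scalar_mx mulVf.
move/mulmx1C; rewrite -scalemxAr => /(congr1 (fun M => c *: M)).
by rewrite scalerA mulfV // scale1r => ->; rewrite scale_scalar_mx mulr1.
Qed.

Section MatrixOfFun.
Variables (T : finType) (N : nat).
Hypothesis cardT : #|T| = N.

Definition elt_of_ord (i : 'I_N) : T := enum_val (cast_ord (esym cardT) i).
Definition ord_of_elt (x : T) : 'I_N := cast_ord cardT (enum_rank x).

Lemma elt_of_ordK : cancel elt_of_ord ord_of_elt.
Proof. by move=> i; rewrite /elt_of_ord /ord_of_elt enum_valK cast_ordKV. Qed.

Lemma ord_of_eltK : cancel ord_of_elt elt_of_ord.
Proof. by move=> x; rewrite /elt_of_ord /ord_of_elt cast_ordK enum_rankK. Qed.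

Variable K : pzSemiRingType.

Definition mx_of_fun (f : T -> T -> K) : 'M[K]_N :=
  \matrix_(i, j) f (elt_of_ord i) (elt_of_ord j).

Lemma mx_of_funM f g :
  mx_of_fun f *m mx_of_fun g = mx_of_fun (fun x y => \sum_z f x z * g z y).
Proof.
apply/matrixP => i j; rewrite !mxE [RHS](reindex elt_of_ord) /=.
  by apply: eq_bigr => l _; rewrite !mxE.
by exists ord_of_elt => x _; rewrite ?elt_of_ordK ?ord_of_eltK.
Qed.

Lemma mx_of_fun_scalar (c : K) : mx_of_fun (fun x y => c * (x == y)%:R) = c%:M.
Proof. by apply/matrixP => i j; rewrite !mxE (can_eq elt_of_ordK) mulr_natr. Qed.

Lemma mx_of_fun_inj f g : mx_of_fun f = mx_of_fun g -> f =2 g.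
Proof.
move=> /matrixP fg x y; have := fg (ord_of_elt x) (ord_of_elt y).
by rewrite !mxE !ord_of_eltK.
Qed.

End MatrixOfFun.

Section ConjTranspose.
Variable R : realType.

Lemma ctrmxM m n p (A : 'M[R[i]]_(m, n)) (B : 'M_(n, p)) :
  ctrmx (A *m B) = ctrmx B *m ctrmx A.
Proof. by rewrite /ctrmx map_mxM trmx_mul. Qed.

Lemma ctrmxK m n (A : 'M[R[i]]_(m, n)) : ctrmx (ctrmx A) = A.
Proof. by apply/matrixP => i j; rewrite !mxE conjCK. Qed.

Lemma ctrmx_mx_of_fun (T : finType) N (cardT : #|T| = N) (f : T -> T -> R[i]) :
  ctrmx (mx_of_fun cardT f) = mx_of_fun cardT (fun x y => Num.conj (f y x)).
Proof. by apply/matrixP => i j; rewrite !mxE. Qed.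

End ConjTranspose.

Section ZeroOrUnit.
Variable R : realType.
Implicit Types x y : R[i].

Lemma zero_or_unit0 : zero_or_unit (0 : R[i]).
Proof. by rewrite /zero_or_unit eqxx. Qed.

Lemma zero_or_unit_nat (b : bool) : zero_or_unit (b%:R : R[i]).
Proof. by case: b; rewrite /zero_or_unit ?eqxx // normr1 eqxx orbT. Qed.

Lemma zero_or_unitM x y :
  zero_or_unit x -> zero_or_unit y -> zero_or_unit (x * y).
Proof.
rewrite /zero_or_unit => /orP[/eqP->|/eqP nx]; first by rewrite mul0r eqxx.
case/orP=> [/eqP->|/eqP ny]; first by rewrite mulr0 eqxx.
by rewrite normrM nx ny mulr1 eqxx orbT.
Qed.

Lemma zero_or_unit_int (z : int) :
  z \in [:: 0; 1; -1] -> zero_or_unit (z%:~R : R[i]).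
Proof.
rewrite !inE /zero_or_unit => /or3P[]/eqP->; rewrite ?eqxx //.
  by rewrite normr1 eqxx orbT.
by rewrite mulrNz normrN normr1 eqxx orbT.
Qed.

Lemma zero_or_unit_sum (I : finType) (f : I -> R[i]) :
  (forall i, zero_or_unit (f i)) ->
  (forall i j, f i != 0 -> f j != 0 -> i = j) ->
  zero_or_unit (\sum_i f i).
Proof.
move=> f_zu f_uniq; have [i fi|f0] := pickP (fun i => f i != 0).
  rewrite (bigD1 i) //= big1 ?addr0 // => j ji.
  by apply/eqP; apply: contraNT ji => fj; apply/eqP/(f_uniq _ _ fj).
by rewrite big1 ?zero_or_unit0 // => i _; apply/eqP/negbFE/f0.
Qed.

End ZeroOrUnit.

Lemma weighing_matrix_col_neq0 n k (W : 'M[int]_n) :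
  (0 < k)%N -> weighing_matrix k W -> forall c, exists a, W a c != 0.
Proof.
move=> k_gt0 [_ WWt] c; have detW : \det W != 0.
  apply/eqP => W0; have := congr1 determinant WWt.
  rewrite det_mulmx W0 mul0r det_scalar => /esym/eqP.
  by rewrite expf_eq0 eqz_nat gtn_eqF ?andbF.
have [a Wa|W0] := pickP (fun a => W a c != 0); first by exists a.
move: detW; rewrite (expand_det_col W c) big1 ?eqxx // => a _.
by move/negbFE/eqP: (W0 a) => ->; rewrite mul0r.
Qed.

Section Slopes.
Variables (F : finFieldType) (m : nat).
Hypotheses (m_gt0 : (0 < m)%N) (m_le : (m <= #|F|)%N).

(* The nonzero elements come first, so that 0 is a slope only when m = #|F|. *)
Definition slopes : seq F := [seq x <- enum F | x != 0] ++ [:: 0].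

Definition slope (c : 'I_m) : F := nth 0 slopes c.

Definition slope_inv (x : F) : 'I_m :=
  odflt (Ordinal m_gt0) [pick c | slope c == x].

Lemma slopes_uniq : uniq slopes.
Proof. by rewrite cat_uniq filter_uniq ?enum_uniq //= mem_filter eqxx. Qed.

Lemma mem_slopes x : x \in slopes.
Proof. by rewrite mem_cat mem_filter mem_enum mem_seq1 andbT orNb. Qed.

Lemma size_slopes : size slopes = #|F|.
Proof.
rewrite cardE; apply/perm_size/uniq_perm; rewrite ?slopes_uniq ?enum_uniq //.
by move=> x; rewrite mem_slopes mem_enum.
Qed.

Lemma slope_inj : injective slope.
Proof.
have lt_size (c : 'I_m) : (c < size slopes)%N.
  by rewrite size_slopes (leq_trans (ltn_ord c)).
move=> c c' /eqP; rewrite nth_uniq ?slopes_uniq ?lt_size //.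
by move/eqP/val_inj.
Qed.

Lemma slopeK : cancel slope slope_inv.
Proof.
move=> c; rewrite /slope_inv; case: pickP => [c' /eqP/slope_inj //|/(_ c)].
by rewrite eqxx.
Qed.

Lemma slope_invK j : slope j = 0 -> cancel slope_inv slope.
Proof.
move=> j0 x; suff [c <-] : exists c, slope c = x by rewrite slopeK.
have [->|x0] := eqVneq x 0; first by exists j.
have j_lt : (j < size slopes)%N by rewrite size_slopes (leq_trans (ltn_ord j)).
have x_nz : x \in [seq y <- enum F | y != 0] by rewrite mem_filter x0 mem_enum.
have ix : (index x slopes < j)%N.
  have -> : nat_of_ord j = index 0 slopes.
    by rewrite -j0 /slope index_uniq ?slopes_uniq.
  by rewrite !index_cat x_nz mem_filter eqxx /= eqxx addn0 index_mem.
exists (Ordinal (ltn_trans ix (ltn_ord j))).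
by rewrite /slope /= nth_index ?mem_slopes.
Qed.

End Slopes.

Section WeighingFamily.
Variables (R : realType) (F : finFieldType) (m k : nat).
Variables (e : 'I_m -> F) (e_inv : F -> 'I_m).
Hypotheses (eK : cancel e e_inv) (e_invK : forall j, e j = 0 -> cancel e_inv e).
Variable W : 'M[int]_m.
Hypotheses (k_gt0 : (0 < k)%N) (W_weighing : weighing_matrix k W).
Local Notation C := R[i].
Local Notation cell := ('I_m * F)%type.

Let e_inj : injective e := can_inj eK.

Definition Wc a c : C := (W a c)%:~R.

Lemma Wc_orthogonal a b : \sum_c Wc a c * Wc b c = k%:R * (a == b)%:R.
Proof.
have -> : \sum_c Wc a c * Wc b c = ((W *m W^T) a b)%:~R.
  by rewrite mxE mulrz_sumr; apply: eq_bigr => c _; rewrite mxE intrM.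
by rewrite W_weighing.2 mxE; case: eqP; rewrite ?mulr1 ?mulr0.
Qed.

Definition Gslope (l : F) (z w : cell) : C :=
  Wc z.1 w.1 * (w.2 == z.2 + l * e w.1)%:R.

Definition Gvert (z w : cell) : C :=
  (z.1 == w.1)%:R * Wc (e_inv z.2) (e_inv w.2).

Definition G j : cell -> cell -> C := if e j == 0 then Gvert else Gslope (e j).

Lemma G_zero_or_unit j z w : zero_or_unit (G j z w).
Proof.
rewrite /G /Gvert /Gslope; case: ifP => _; apply: zero_or_unitM;
  by rewrite ?zero_or_unit_nat ?zero_or_unit_int ?W_weighing.1.
Qed.

Lemma G_real j z w : Num.conj (G j z w) = G j z w.
Proof.
by rewrite /G /Gvert /Gslope; case: ifP => _; rewrite rmorphM rmorph_nat rmorph_int.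
Qed.

Lemma Gslope_orthogonal l z w :
  \sum_y Gslope l z y * Gslope l w y = k%:R * (z == w)%:R.
Proof.
rewrite sum_pair natr_eq_pair.
transitivity (\sum_c Wc z.1 c * Wc w.1 c * (z.2 == w.2)%:R).
  apply: eq_bigr => c _; rewrite /Gslope /=.
  transitivity (\sum_t (t == z.2 + l * e c)%:R *
    (Wc z.1 c * Wc w.1 c * (t == w.2 + l * e c)%:R)).
    by apply: eq_bigr => t _; ring.
  by rewrite sum_delta (inj_eq (addIr _)).
by rewrite -mulr_suml Wc_orthogonal mulrA.
Qed.

Lemma Gvert_orthogonal : cancel e_inv e ->
  forall z w, \sum_y Gvert z y * Gvert w y = k%:R * (z == w)%:R.
Proof.
move=> e_invK' z w; rewrite sum_pair natr_eq_pair.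
transitivity (\sum_c (c == z.1)%:R * ((w.1 == c)%:R *
    \sum_t Wc (e_inv z.2) (e_inv t) * Wc (e_inv w.2) (e_inv t))).
  apply: eq_bigr => c _; rewrite !mulr_sumr; apply: eq_bigr => t _.
  by rewrite /Gvert /= (eq_sym c); ring.
rewrite sum_delta (reindex e) /=; last by exists e_inv => ? _; rewrite ?eK ?e_invK'.
under eq_bigr do rewrite !eK.
by rewrite Wc_orthogonal (can_eq e_invK') (eq_sym w.1); ring.
Qed.

Lemma G_orthogonal j z w : \sum_y G j z y * G j w y = k%:R * (z == w)%:R.
Proof.
rewrite /G; case: ifP => [/eqP/e_invK/Gvert_orthogonal // | _].
exact: Gslope_orthogonal.
Qed.

Lemma Gslope_neq0 l z c t : Gslope l z (c, t) != 0 -> t = z.2 + l * e c.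
Proof. by rewrite /Gslope /=; case: (t =P _) => // _; rewrite mulr0 eqxx. Qed.

Lemma Gvert_neq0 z c t : Gvert z (c, t) != 0 -> c = z.1.
Proof. by rewrite /Gvert /=; case: (z.1 =P c) => // _; rewrite mul0r eqxx. Qed.

Lemma G_fiber j z c c' t : G j z (c, t) != 0 -> G j z (c', t) != 0 -> c = c'.
Proof.
rewrite /G; case: ifP => [_ /Gvert_neq0 -> /Gvert_neq0 -> // | /negbT j0].
by move=> /Gslope_neq0 -> /Gslope_neq0 /addrI /(mulfI j0) /e_inj.
Qed.

Lemma slope_meet (l l' r r' : F) c c' : l != l' ->
  r + l * e c = r' + l' * e c -> r + l * e c' = r' + l' * e c' -> c = c'.
Proof.
have root x : r + l * x = r' + l' * x -> l != l' -> x = (r' - r) / (l - l').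
  move=> E ll'; have -> : r' = r + l * x - l' * x by rewrite E addrK.
  by field; rewrite subr_eq0.
by move=> ll' /root/(_ ll') Ec /root/(_ ll') Ec'; apply: e_inj; rewrite Ec Ec'.
Qed.

Lemma G_cross i j z w : i != j -> zero_or_unit (\sum_y G i z y * G j w y).
Proof.
move=> ij; apply: zero_or_unit_sum => [y|[c t] [c' t']].
  by apply: zero_or_unitM; apply: G_zero_or_unit.
rewrite !mulf_eq0 !negb_or => /andP[zi wj] /andP[zi' wj']; move: zi wj zi' wj'.
have e_ij : e i != e j by rewrite (inj_eq e_inj).
rewrite /G; case: ifP => i0; case: ifP => j0.
- by move: e_ij; rewrite (eqP i0) (eqP j0) eqxx.
- by move=> /Gvert_neq0 -> /Gslope_neq0 -> /Gvert_neq0 -> /Gslope_neq0 ->.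
- by move=> /Gslope_neq0 -> /Gvert_neq0 -> /Gslope_neq0 -> /Gvert_neq0 ->.
move=> /Gslope_neq0 -> /Gslope_neq0 Ec /Gslope_neq0 -> /Gslope_neq0 Ec'.
by rewrite (slope_meet e_ij Ec Ec').
Qed.

Lemma G_separated i j : i != j -> exists z w, G i z w != G j z w.
Proof.
wlog j0 : i j / e j != 0.
  move=> sep ij; have [j0|j0] := eqVneq (e j) 0; last exact: sep.
  have i0 : e i != 0 by rewrite -j0 (inj_eq e_inj).
  have [|z [w]] := sep j i i0; first by rewrite eq_sym.
  by exists z, w; rewrite eq_sym.
move=> ij; have [a Waj] := weighing_matrix_col_neq0 k_gt0 W_weighing j.
rewrite /G (negbTE j0); case: ifP => [_ | /negbT i0].
  case: (eqVneq a j) Waj => [-> Wjj|aj Waj].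
    exists (j, e j), (j, e j); have -> : Gslope (e j) (j, e j) (j, e j) = 0.
      apply: contraTeq (mulf_neq0 j0 j0) => /Gslope_neq0 /=.
      by rewrite -{1}[e j]addr0 => /addrI <-; rewrite eqxx.
    by rewrite /Gvert /= eqxx eK mul1r /Wc intr_eq0.
  exists (a, 0), (j, e j * e j).
  by rewrite /Gvert /Gslope /= (negbTE aj) mul0r add0r eqxx mulr1 eq_sym /Wc intr_eq0.
have ij' : e i * e j != e j * e j by rewrite (inj_eq (mulIf j0)) (inj_eq e_inj).
exists (a, 0), (j, e i * e j).
by rewrite /Gslope /= !add0r eqxx (negbTE ij') mulr1 mulr0 /Wc intr_eq0.
Qed.

Lemma G_inj i j : G i =2 G j -> i = j.
Proof.
move=> Gij; have [//|/G_separated[z [w]]] := eqVneq i j.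
by rewrite Gij eqxx.
Qed.

Lemma card_cell : #|{: cell}| = (m * #|F|)%N.
Proof. by rewrite card_prod card_ord. Qed.

Definition MG j : 'M[C]_(m * #|F|) := mx_of_fun card_cell (G j).

Lemma MG_mul_ctrmx i j :
  MG i *m ctrmx (MG j) = mx_of_fun card_cell (fun z w => \sum_y G i z y * G j w y).
Proof.
rewrite ctrmx_mx_of_fun mx_of_funM; apply/matrixP => a b; rewrite !mxE.
by apply: eq_bigr => y _; rewrite G_real.
Qed.

Lemma MG_unitary j : MG j *m ctrmx (MG j) = (k%:R : C)%:M.
Proof.
rewrite MG_mul_ctrmx -(mx_of_fun_scalar card_cell); apply/matrixP => a b.
by rewrite !mxE G_orthogonal.
Qed.

Lemma ctrmx_MG_unitary j : ctrmx (MG j) *m MG j = (k%:R : C)%:M.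
Proof. by apply: mulmx_scalarC (MG_unitary j); rewrite pnatr_eq0 -lt0n. Qed.

Lemma MG_cross i j a b : i != j -> zero_or_unit ((MG i *m ctrmx (MG j)) a b).
Proof. by move=> ij; rewrite MG_mul_ctrmx mxE; apply: G_cross. Qed.

Lemma MG_inj : injective MG.
Proof. by move=> i j /mx_of_fun_inj; apply: G_inj. Qed.

Variables (u : nat) (s : 'I_u -> nat) (A : rdesign m u).
Hypothesis A_orthogonal : orthogonal_design R s A.

Definition sqform (x : 'I_u -> R) : R := \sum_(l < u) (s l)%:R * x l ^+ 2.

Definition Akron x (z w : cell) : C :=
  (rdesign_eval A x z.1 w.1)%:C * (z.2 == w.2)%:R.

Lemma Akron_orthogonal x z w :
  \sum_y Akron x z y * Akron x w y = (sqform x)%:C * (z == w)%:R.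
Proof.
have AAt : \sum_c rdesign_eval A x z.1 c * rdesign_eval A x w.1 c
    = sqform x *+ (z.1 == w.1).
  have /matrixP/(_ z.1 w.1) := A_orthogonal x.
  rewrite mxE [(_%:M) _ _]mxE -/(sqform x) => <-.
  by apply: eq_bigr => c _; rewrite [_^T _ _]mxE.
have -> : (sqform x)%:C * (z == w)%:R = \sum_c
    (rdesign_eval A x z.1 c * rdesign_eval A x w.1 c)%:C * (z.2 == w.2)%:R.
  by rewrite natr_eq_pair -mulr_suml -rmorph_sum AAt rmorphMn mulrA -[_ *+ (z.1 == w.1)]mulr_natr.
rewrite sum_pair.
apply: eq_bigr => c _; rewrite /Akron /=.
transitivity (\sum_t (t == z.2)%:R * ((rdesign_eval A x z.1 c)%:C *
    (rdesign_eval A x w.1 c)%:C * (w.2 == t)%:R)).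
  by apply: eq_bigr => t _; rewrite (eq_sym z.2); ring.
by rewrite sum_delta rmorphM eq_sym.
Qed.

Definition MA x : 'M[C]_(m * #|F|) := mx_of_fun card_cell (Akron x).

Lemma Akron_real x z w : Num.conj (Akron x z w) = Akron x z w.
Proof.
have conj_real (v : R) : Num.conj v%:C = v%:C := conjc_real v.
by rewrite /Akron rmorphM /= conj_real rmorph_nat.
Qed.

Lemma MA_unitary x : MA x *m ctrmx (MA x) = (sqform x)%:C%:M.
Proof.
rewrite ctrmx_mx_of_fun mx_of_funM -(mx_of_fun_scalar card_cell).
apply/matrixP => a b; rewrite !mxE -Akron_orthogonal; apply: eq_bigr => y _.
by rewrite Akron_real.
Qed.

Definition Dentry j (z w : cell) : option (C * 'I_u) :=
  if [pick c | G j z (c, w.2) != 0] is Some c then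
    if A c w.1 is Some (b, l) then Some (G j z (c, w.2) * (-1) ^+ b, l)
    else None
  else None.

Definition D j : udesign R (m * #|F|) u :=
  \matrix_(a, b) Dentry j (elt_of_ord card_cell a) (elt_of_ord card_cell b).

Lemma D_eval j x : udesign_eval (D j) x = MG j *m MA x.
Proof.
rewrite /MG /MA mx_of_funM; apply/matrixP => a b; rewrite !mxE sum_pair.
set z := elt_of_ord _ a; set w := elt_of_ord _ b.
transitivity (\sum_c G j z (c, w.2) * (rdesign_eval A x c w.1)%:C); last first.
  apply: eq_bigr => c _; rewrite /Akron /=.
  transitivity (\sum_t (t == w.2)%:R * (G j z (c, t) * (rdesign_eval A x c w.1)%:C)).
    by rewrite sum_delta.
  by apply: eq_bigr => t _; ring.
rewrite /Dentry; case: pickP => [c zc|z0]; last first.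
  by rewrite big1 // => c _; move/negbFE/eqP: (z0 c) => ->; rewrite mul0r.
rewrite (bigD1 c) //= big1 ?addr0 => [|c' c'c]; last first.
  apply/eqP; rewrite mulf_eq0; apply/orP; left.
  by apply: contraR c'c => zc'; apply/eqP; apply: G_fiber zc' zc.
rewrite /rdesign_eval mxE; case: (A c w.1) => [[b' l]|]; last first.
  by rewrite rmorph0 mulr0.
by rewrite rmorphM rmorph_sign mulrA.
Qed.

Lemma D_coeffs_unit j : udesign_coeffs_unit (D j).
Proof.
move=> a b eps l; rewrite mxE /Dentry; case: pickP => [c zc|] //.
case: (A c _) => [[b' l']|] //= [<- _].
have := G_zero_or_unit j (elt_of_ord card_cell a) (c, (elt_of_ord card_cell b).2).
rewrite /zero_or_unit (negbTE zc) /= => /eqP.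
by rewrite normrM => ->; rewrite normrX normrN1 expr1n mulr1.
Qed.

Lemma D_mul i j x :
  udesign_eval (D i) x *m ctrmx (udesign_eval (D j) x)
  = (sqform x)%:C *: (MG i *m ctrmx (MG j)).
Proof.
rewrite !D_eval ctrmxM !mulmxA -(mulmxA (MG i)) MA_unitary mul_mx_scalar.
by rewrite -scalemxAl.
Qed.

Lemma D_eval_inj x i j :
  sqform x != 0 -> udesign_eval (D i) x = udesign_eval (D j) x -> i = j.
Proof.
move=> x0; rewrite !D_eval => /(congr1 (mulmx^~ (ctrmx (MA x)))) /=.
rewrite -!mulmxA MA_unitary !mul_mx_scalar => /scalerI MGij; apply: MG_inj.
by apply: MGij; rewrite (_ : 0 = 0%:C) // (inj_eq (@complexI _)).
Qed.

Definition indicator (S : {set 'I_u}) (l : 'I_u) : R := (l \in S)%:R.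

Lemma sqform_indicator (S : {set 'I_u}) :
  sqform (indicator S) = (\sum_(l in S) s l)%:R.
Proof.
rewrite /sqform /indicator natr_sum [RHS]big_mkcond; apply: eq_bigr => l _ /=.
by case: (l \in S); rewrite ?expr1n ?mulr1 // expr0n mulr0.
Qed.

Lemma D_eval_mutually_quasi_unbiased (S : {set 'I_u}) :
  (0 < \sum_(l in S) s l)%N ->
  injective (fun j => udesign_eval (D j) (indicator S)) /\
  mutually_quasi_unbiased (k * \sum_(l in S) s l)%N (k ^ 2)%N
    (((\sum_(l in S) s l) ^ 2)%:R : R)
    (fun j => udesign_eval (D j) (indicator S)).
Proof.
set t := \sum_(l in S) s l => t_gt0.
have t0 : (t%:R : R) != 0 by rewrite pnatr_eq0 -lt0n.
have sqS : sqform (indicator S) = t%:R by rewrite sqform_indicator.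
have DS_weighing j : unit_weighing_matrix (k * t) (udesign_eval (D j) (indicator S)).
  split=> [a b|]; last first.
    by rewrite D_mul MG_unitary scale_scalar_mx sqS rmorph_nat natrM mulrC.
  rewrite mxE; case E: (D j a b) => [[eps l]|]; last exact: zero_or_unit0.
  apply: zero_or_unitM; first by rewrite /zero_or_unit (D_coeffs_unit E) eqxx orbT.
  by rewrite /indicator rmorph_nat; apply: zero_or_unit_nat.
split=> [i j|i j ij]; first by apply: D_eval_inj; rewrite sqS.
split; [exact: DS_weighing | exact: DS_weighing |].
rewrite D_mul sqS natrX sqrtr_sqr ger0_norm ?ler0n //.
rewrite scalerA -rmorphM /= mulVf // scale1r; split=> [a b|]; first exact: MG_cross.
rewrite ctrmxM ctrmxK !mulmxA -(mulmxA (MG i)) ctrmx_MG_unitary mul_mx_scalar.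
by rewrite -scalemxAl MG_unitary scale_scalar_mx natrX expr2.
Qed.

Lemma D_mutually_unbiased : (0 < u)%N -> (forall l, 0 < s l)%N ->
  injective D /\ mutually_unbiased_designs (fun l => k * s l)%N ((k ^ 2)%:R : R) D.
Proof.
move=> u_gt0 s_gt0.
have sqk : Num.sqrt ((k ^ 2)%:R : R) = k%:R.
  by rewrite natrX sqrtr_sqr ger0_norm ?ler0n.
have sqform_k x : \sum_(l < u) (k * s l)%N%:R * x l ^+ 2 = k%:R * sqform x.
  by rewrite /sqform mulr_sumr; apply: eq_bigr => l _; rewrite natrM mulrA.
have D_orthogonal j : unit_orthogonal_design (fun l => k * s l)%N (D j).
  split=> [|x]; first exact: D_coeffs_unit.
  rewrite D_mul MG_unitary scale_scalar_mx sqform_k; congr (_%:M).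
  by rewrite rmorphM rmorph_nat mulrC.
split=> [i j Dij|i j ij].
  have setT_sum_gt0 : (0 < \sum_(l in [set: 'I_u]) s l)%N.
    by apply: sum_nat_gt0_set s_gt0 _; apply/set0Pn; exists (Ordinal u_gt0).
  have [inj _] := D_eval_mutually_quasi_unbiased setT_sum_gt0.
  by apply: inj; rewrite /= Dij.
split; [exact: D_orthogonal | exact: D_orthogonal | by rewrite ltr0n expn_gt0 k_gt0 |].
exists (MG i *m ctrmx (MG j)); split=> [a b|x]; first exact: MG_cross.
by rewrite D_mul sqform_k sqk mulrC mulrA mulVf ?mul1r // pnatr_eq0 -lt0n.
Qed.

End WeighingFamily.

Theorem theorem6p2 (R : realType) (q m k u : nat) (s : 'I_u -> nat) :
  (0 < q)%N -> (0 < m)%N -> (0 < k)%N -> (0 < u)%N ->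
  (forall l, (0 < s l)%N) ->
  prime_power q -> (m <= q)%N ->
  (exists W : 'M[int]_m, weighing_matrix k W) ->
  (exists D : rdesign m u, orthogonal_design R s D) ->
  (* (1) *)
  (exists D : 'I_m -> udesign R (m * q) u,
      injective D /\
      mutually_unbiased_designs (fun l => k * s l)%N ((k ^ 2)%:R : R) D)
  /\
  (* (2) *)
  (forall S : {set 'I_u}, S != set0 ->
     exists W : 'I_m -> 'M[R[i]]_(m * q),
       injective W /\
       mutually_quasi_unbiased (k * \sum_(l in S) s l)%N (k ^ 2)%N
         (((\sum_(l in S) s l) ^ 2)%:R : R) W).
Proof.
move=> _ m_gt0 k_gt0 u_gt0 s_gt0 [p [n [p_prime n_gt0 q_eq]]] m_le.
move=> [W W_weighing] [A A_orthogonal].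
have [F _ cardF] := pPrimePowerField p_prime n_gt0.
have {cardF q_eq} cardF : #|F| = q by rewrite cardF q_eq.
subst q.
have eK := slopeK m_gt0 m_le; have e_invK := @slope_invK _ _ m_gt0 m_le.
split.
  eexists; exact: (D_mutually_unbiased (R := R) eK e_invK k_gt0 W_weighing
    A_orthogonal u_gt0 s_gt0).
move=> S S_neq0; eexists.
exact: (D_eval_mutually_quasi_unbiased (R := R) eK e_invK k_gt0 W_weighing
  A_orthogonal (sum_nat_gt0_set s_gt0 S_neq0)).
Qed.
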